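(* Let $(W,S)$ be a Coxeter system of finite rank and $S'$ another set of Coxeter generators of $W$ such that $S'\subseteq S^W$ and $S$ is sharp-angled with respect to $S'$. Let $B\subseteq S$ and $B'\subseteq S'$ satisfy $\langle B\rangle=\langle B'\rangle$. Then $B'\subseteq B^{\langle B\rangle}$ and $B$ is sharp-angled with respect to $B'$ (as sets of Coxeter generators of $\langle B\rangle$).
   Context: Coxeter system $(W,S)$: $W=\langle S\mid (st)^{m(s,t)}\ (m(s,t)<\infty)\rangle$, $m(s,s)=1$, $m(s,t)=m(t,s)\in\{2,\dots,\infty\}$; $S$ is a set of Coxeter generators. For a group $G$ and subset $X$, $X^G=\{gxg^{-1}: g\in G, x\in X\}$. If $S'\subseteq S^W$ is another set of Coxeter generators of $W$, $S$ is sharp-angled with respect to $S'$ if for all $s,t\in S$ with $2<m(s,t)<\infty$ there exists $w\in W$ with $w\{s,t\}w^{-1}\subseteq S'$ (for $B,B'$ generating $\langle B\rangle$, the same definition is used with $W$ replaced by $\langle B\rangle$). *)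

From Stdlib Require Import List.

Record Grp : Type := {
  carrier :> Type;
  gmul : carrier -> carrier -> carrier;
  ginv : carrier -> carrier;
  gone : carrier;
  gmulA : forall x y z, gmul x (gmul y z) = gmul (gmul x y) z;
  gmul1 : forall x, gmul gone x = x;
  gmulV : forall x, gmul (ginv x) x = gone
}.

Arguments gmul {g}. Arguments ginv {g}. Arguments gone {g}.

Fixpoint gpow {G : Grp} (x : G) (n : nat) : G :=
  match n with O => gone | S k => gmul x (gpow x k) end.

Inductive gen {G : Grp} (A : G -> Prop) : G -> Prop :=
| gen_one : gen A gone
| gen_in : forall x, A x -> gen A x
| gen_mul : forall x y, gen A x -> gen A y -> gen A (gmul x y)
| gen_inv : forall x, gen A x -> gen A (ginv x).

Definition order_eq {G : Grp} (x : G) (n : nat) : Prop :=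
  0 < n /\ gpow x n = gone /\ forall k, 0 < k < n -> gpow x k <> gone.

(* S is a set of Coxeter generators of the subgroup H of W
   (H given as a predicate; H = everything for W itself):
   S generates H, consists of involutions, and H has the presentation
   < S | (st)^{m(s,t)} (m(s,t) < oo) > with m(s,t) the order of st,
   expressed by the universal property of the presentation. *)
Definition coxeter_gens (W : Grp) (H S : W -> Prop) : Prop :=
  (forall x, H x <-> gen S x) /\
  (forall s, S s -> s <> gone /\ gmul s s = gone) /\
  (forall (G : Grp) (f : W -> G),
     (forall s t n, S s -> S t -> gpow (gmul s t) n = gone ->
                    gpow (gmul (f s) (f t)) n = gone) ->
     exists phi : W -> G,
       (forall x y, H x -> H y -> phi (gmul x y) = gmul (phi x) (phi y)) /\
       (forall s, S s -> phi s = f s)).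

Definition finite_set {W : Grp} (S : W -> Prop) : Prop :=
  exists l : list W, forall s, S s <-> In s l.

(* X^H = { h x h^-1 : h in H, x in X } *)
Definition conj_closure {W : Grp} (H X : W -> Prop) (y : W) : Prop :=
  exists h x, H h /\ X x /\ y = gmul (gmul h x) (ginv h).

Definition sharp_angled {W : Grp} (H S S' : W -> Prop) : Prop :=
  forall s t m, S s -> S t -> order_eq (gmul s t) m -> 2 < m ->
    exists w, H w /\ S' (gmul (gmul w s) (ginv w)) /\ S' (gmul (gmul w t) (ginv w)).

From Stdlib Require Import List Arith Lia Bool Classical ClassicalEpsilon
  ProofIrrelevance FunctionalExtensionality.
Import ListNotations.

(* Both claims rest on one fact about a parabolic subgroup P = <K> (K ⊆ S) of a
   Coxeter system (W, S): for every w there is u ∈ P such that u s u⁻¹ ∈ K for each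
   s ∈ P with w s w⁻¹ ∈ S.  Choose u so that d = u w⁻¹ has minimal length in the coset
   P w⁻¹.  Lengths add along P d, so for the generator r = w s w⁻¹ the element
   d r d⁻¹ = u s u⁻¹ ∈ P satisfies l(d r d⁻¹) + l(d) = l(d r) ≤ l(d) + 1, and an element
   of P of length one lies in K.  The length theory comes from the exchange condition,
   which is proved through Tits' action of W on pairs (reflection, sign).
   For the first claim apply this to (S, B); for the second to (S', B'), with the w
   provided by sharp-angledness conjugating s and t into S' simultaneously. *)

Arguments gmulA {g}. Arguments gmul1 {g}. Arguments gmulV {g}.
Local Infix "**" := gmul (at level 40, left associativity).

Section GroupFacts.
Context {G : Grp}.
Implicit Types a b c x y : G.

Lemma gmulVr a : a ** ginv a = gone.
Proof.
  rewrite <- (gmul1 (a ** ginv a)).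
  rewrite <- (gmulV (ginv a)) at 1.
  rewrite <- gmulA, (gmulA (ginv a) a (ginv a)), gmulV, gmul1.
  apply gmulV.
Qed.

Lemma gmul1r a : a ** gone = a.
Proof. rewrite <- (gmulV a), gmulA, gmulVr, gmul1. reflexivity. Qed.

Lemma gmul_cancel_l a b c : a ** b = a ** c -> b = c.
Proof.
  intro E. rewrite <- (gmul1 b), <- (gmul1 c), <- (gmulV a), <- !gmulA, E.
  reflexivity.
Qed.

Lemma gmul_cancel_r a b c : b ** a = c ** a -> b = c.
Proof.
  intro E. rewrite <- (gmul1r b), <- (gmul1r c), <- (gmulVr a), !gmulA, E.
  reflexivity.
Qed.

Lemma ginv_uniq a b : a ** b = gone -> b = ginv a.
Proof. intro E. apply (gmul_cancel_l a). rewrite E, gmulVr. reflexivity. Qed.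

Lemma ginvK a : ginv (ginv a) = a.
Proof. symmetry. apply ginv_uniq, gmulV. Qed.

Lemma ginvM a b : ginv (a ** b) = ginv b ** ginv a.
Proof.
  symmetry. apply ginv_uniq.
  rewrite <- gmulA, (gmulA b), gmulVr, gmul1, gmulVr. reflexivity.
Qed.

Lemma ginv1 : ginv (@gone G) = gone.
Proof. symmetry. apply ginv_uniq, gmul1. Qed.

Lemma gidem_eq1 a : a ** a = a -> a = gone.
Proof. intro E. apply (gmul_cancel_l a). rewrite E, gmul1r. reflexivity. Qed.

Lemma ginv_invol a : a ** a = gone -> ginv a = a.
Proof. intro E. symmetry. apply ginv_uniq, E. Qed.

Lemma gpowD x m n : gpow x (m + n) = gpow x m ** gpow x n.
Proof.
  induction m as [|m IH]; simpl.
  - rewrite gmul1. reflexivity.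
  - rewrite IH, gmulA. reflexivity.
Qed.

Lemma gpowSr x n : gpow x (S n) = gpow x n ** x.
Proof. rewrite <- Nat.add_1_r, gpowD. simpl. rewrite gmul1r. reflexivity. Qed.

Definition conjg c x : G := c ** x ** ginv c.

Lemma conjg_mul a b x : conjg (a ** b) x = conjg a (conjg b x).
Proof. unfold conjg. rewrite ginvM, !gmulA. reflexivity. Qed.

Lemma conjg1 x : conjg gone x = x.
Proof. unfold conjg. rewrite ginv1, gmul1, gmul1r. reflexivity. Qed.

Lemma conjgK c x : conjg (ginv c) (conjg c x) = x.
Proof. rewrite <- conjg_mul, gmulV, conjg1. reflexivity. Qed.

Lemma conjgKV c x : conjg c (conjg (ginv c) x) = x.
Proof. rewrite <- conjg_mul, gmulVr, conjg1. reflexivity. Qed.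

Lemma conjg_inj c x y : conjg c x = conjg c y -> x = y.
Proof. intro E. rewrite <- (conjgK c x), E. apply conjgK. Qed.

Lemma conjg_self c : conjg c c = c.
Proof. unfold conjg. rewrite <- gmulA, gmulVr, gmul1r. reflexivity. Qed.

Lemma conjg_mulr c x : conjg c x ** c = c ** x.
Proof. unfold conjg. rewrite <- gmulA, gmulV, gmul1r. reflexivity. Qed.

Lemma conjgV_mul w x d : conjg (ginv w) x ** d = ginv w ** (x ** w ** d).
Proof. unfold conjg. rewrite ginvK, !gmulA. reflexivity. Qed.

End GroupFacts.

Arguments conjg : simpl never.

Section Words.
Context {G : Grp}.
Implicit Types (K : G -> Prop) (a b : list G).

Definition wprod a : G := fold_right gmul gone a.

Lemma wprod_nil : wprod [] = gone.
Proof. reflexivity. Qed.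

Lemma wprod_cons x a : wprod (x :: a) = x ** wprod a.
Proof. reflexivity. Qed.

Lemma wprod_app a b : wprod (a ++ b) = wprod a ** wprod b.
Proof.
  induction a as [|x a IH].
  - rewrite app_nil_l, wprod_nil, gmul1. reflexivity.
  - rewrite <- app_comm_cons, !wprod_cons, IH, gmulA. reflexivity.
Qed.

Lemma gen_wprod K a : Forall K a -> gen K (wprod a).
Proof.
  induction 1; [apply gen_one|]. rewrite wprod_cons. apply gen_mul; [now apply gen_in|assumption].
Qed.

Lemma gen_word K x : (forall s, K s -> s ** s = gone) -> gen K x ->
  exists a, Forall K a /\ wprod a = x.
Proof.
  intros Kinvol Kx.
  assert (wprod_rev : forall a, Forall K a -> ginv (wprod a) = wprod (rev a)).
  { induction 1 as [|y a Ky _ IH]; simpl.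
    - apply ginv1.
    - rewrite wprod_app, wprod_cons, ginvM, IH, (ginv_invol _ (Kinvol y Ky)), wprod_nil.
      rewrite gmul1r. reflexivity. }
  induction Kx as [| x Kx | x y _ [a [Ka Ea]] _ [b [Kb Eb]] | x _ [a [Ka Ea]]].
  - exists []. auto.
  - exists [x]. rewrite wprod_cons, wprod_nil, gmul1r. auto.
  - exists (a ++ b). rewrite wprod_app, Ea, Eb. split; [apply Forall_app|]; auto.
  - exists (rev a). rewrite <- Ea, wprod_rev by assumption. split; [apply Forall_rev|]; auto.
Qed.

Lemma gen_conjg K c x : gen K c -> gen K x -> gen K (conjg c x).
Proof. intros Kc Kx. unfold conjg. repeat apply gen_mul; auto using gen_inv. Qed.

End Words.

Arguments wprod : simpl never.

Lemma Forall_app_cons {A} (P : A -> Prop) p x q :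
  Forall P (p ++ x :: q) -> Forall P (p ++ q) /\ P x.
Proof.
  intro H. apply Forall_app in H as [Hp Hxq]. inversion Hxq; subst.
  split; [apply Forall_app|]; auto.
Qed.

Lemma nat_min_exists (P : nat -> Prop) :
  (exists n, P n) -> exists n, P n /\ forall m, P m -> n <= m.
Proof.
  intros [n Pn]. induction n as [n IH] using (well_founded_induction lt_wf).
  destruct (classic (exists m, m < n /\ P m)) as [[m [lt_mn Pm]]|no_smaller].
  - exact (IH m lt_mn Pm).
  - exists n. split; [assumption|]. intros m Pm.
    destruct (Nat.lt_ge_cases m n); [exfalso; eauto|assumption].
Qed.

Definition ceqb {A : Type} (a b : A) : bool :=
  if excluded_middle_informative (a = b) then true else false.

Lemma ceqb_true {A} (a b : A) : ceqb a b = true <-> a = b.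
Proof. unfold ceqb. destruct excluded_middle_informative; split; congruence. Qed.

Lemma ceqb_refl {A} (a : A) : ceqb a a = true.
Proof. apply ceqb_true. reflexivity. Qed.

Lemma ceqb_inj {A B} (f : A -> B) a b :
  (forall x y, f x = f y -> x = y) -> ceqb (f a) (f b) = ceqb a b.
Proof.
  intro f_inj. unfold ceqb.
  destruct (excluded_middle_informative (a = b)) as [->|ne];
    destruct excluded_middle_informative; auto; now exfalso; auto.
Qed.

Definition XorGrp : Grp.
Proof.
  refine {| carrier := bool; gmul := xorb; ginv := fun b => b; gone := false |}.
  - intros [] [] []; reflexivity.
  - intros []; reflexivity.
  - intros []; reflexivity.
Defined.

Section PermGroup.
Variable X : Type.

Definition inverse_pair (p : (X -> X) * (X -> X)) : Prop :=
  (forall z, fst p (snd p z) = z) /\ (forall z, snd p (fst p z) = z).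

Definition perm : Type := {p | inverse_pair p}.

Definition perm_fun (p : perm) : X -> X := fst (proj1_sig p).

Lemma perm_ext (p q : perm) : (forall z, perm_fun p z = perm_fun q z) -> p = q.
Proof.
  destruct p as [[f g] [fg gf]], q as [[f' g'] [fg' gf']]; unfold perm_fun; cbn in *.
  intro E. assert (f = f') by (apply functional_extensionality; auto). subst f'.
  assert (g = g').
  { apply functional_extensionality. intro z. rewrite <- (gf' (g z)), fg. reflexivity. }
  subst g'. f_equal. apply proof_irrelevance.
Qed.

Lemma perm_mul_subproof (p q : perm) :
  inverse_pair (fun z => fst (proj1_sig p) (fst (proj1_sig q) z),
                fun z => snd (proj1_sig q) (snd (proj1_sig p) z)).
Proof.
  destruct p as [[f g] [fg gf]], q as [[f' g'] [fg' gf']]; cbn in *.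
  split; intro z; cbn; [rewrite fg'|rewrite gf]; auto.
Qed.

Lemma perm_inv_subproof (p : perm) : inverse_pair (snd (proj1_sig p), fst (proj1_sig p)).
Proof. destruct p as [[f g] [fg gf]]. split; assumption. Qed.

Lemma perm_one_subproof : inverse_pair (fun z => z, fun z => z).
Proof. split; reflexivity. Qed.

Definition Perm : Grp.
Proof.
  refine {| carrier := perm;
            gmul p q := exist _ _ (perm_mul_subproof p q);
            ginv p := exist _ _ (perm_inv_subproof p);
            gone := exist _ _ perm_one_subproof |}.
  - intros. apply perm_ext. reflexivity.
  - intros. apply perm_ext. reflexivity.
  - intros [[f g] [fg gf]]. apply perm_ext. exact gf.
Defined.

End PermGroup.

Arguments perm_fun {X}.

Section CoxeterSystem.
Variables (W : Grp) (Sgen : W -> Prop).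
Hypothesis cox : coxeter_gens W (fun _ => True) Sgen.

Lemma gens_invol s : Sgen s -> s ** s = gone.
Proof. intro Ss. apply (proj1 (proj2 cox) s Ss). Qed.

Lemma gens_neq1 s : Sgen s -> s <> gone.
Proof. intro Ss. apply (proj1 (proj2 cox) s Ss). Qed.

Lemma gens_inv s : Sgen s -> ginv s = s.
Proof. intro Ss. apply ginv_invol, gens_invol, Ss. Qed.

Lemma gens_mulK s w : Sgen s -> s ** (s ** w) = w.
Proof. intro Ss. rewrite gmulA, gens_invol, gmul1 by assumption. reflexivity. Qed.

Lemma gens_mul_conjg s t : Sgen s -> s ** conjg s t = t ** s.
Proof.
  intro Ss. unfold conjg.
  rewrite gens_inv, !gmulA, gens_invol, gmul1 by assumption. reflexivity.
Qed.

Lemma gens_word x : exists a, Forall Sgen a /\ wprod a = x.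
Proof. apply gen_word; [exact gens_invol|]. apply (proj1 cox). exact I. Qed.

Lemma coxeter_hom (G : Grp) (f : W -> G) :
  (forall s t n, Sgen s -> Sgen t -> gpow (s ** t) n = gone -> gpow (f s ** f t) n = gone) ->
  exists phi : W -> G,
    (forall x y, phi (x ** y) = phi x ** phi y) /\ forall s, Sgen s -> phi s = f s.
Proof.
  intro rel. destruct (proj2 (proj2 cox) G f rel) as [phi [phiM phiS]].
  exists phi. split; [intros; apply phiM; exact I | exact phiS].
Qed.

Definition has_length w n := exists a, Forall Sgen a /\ length a = n /\ wprod a = w.

Definition len w : nat :=
  epsilon (inhabits 0) (fun n => has_length w n /\ forall m, has_length w m -> n <= m).

Lemma len_spec w : has_length w (len w) /\ forall m, has_length w m -> len w <= m.
Proof.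
  unfold len. apply epsilon_spec, nat_min_exists.
  destruct (gens_word w) as [a [Sa Ea]]. exists (length a), a. auto.
Qed.

Lemma len_reduced w : exists a, Forall Sgen a /\ length a = len w /\ wprod a = w.
Proof. apply len_spec. Qed.

Lemma len_wprod a : Forall Sgen a -> len (wprod a) <= length a.
Proof. intro Sa. apply len_spec. exists a. auto. Qed.

Lemma len_eq0 w : len w = 0 -> w = gone.
Proof.
  intro L0. destruct (len_reduced w) as [[|s a] [_ [La <-]]]; [reflexivity|].
  rewrite L0 in La. discriminate.
Qed.

Lemma length_parity w : exists b, forall n, has_length w n -> Nat.odd n = b.
Proof.
  destruct (coxeter_hom XorGrp (fun _ => true)) as [eps [epsM epsS]].
  { intros s t n _ _ _. simpl. induction n; simpl; auto. }
  assert (eps1 : eps gone = false).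
  { pose proof (epsM gone gone) as E. rewrite gmul1 in E. simpl in E.
    destruct (eps gone); simpl in E; congruence. }
  exists (eps w). intros n [a [Sa [<- <-]]].
  induction Sa as [|s a Ss _ IH].
  - rewrite wprod_nil, eps1. reflexivity.
  - rewrite wprod_cons, epsM, epsS, <- IH by assumption. simpl.
    rewrite Nat.odd_succ, <- Nat.negb_odd. reflexivity.
Qed.

Lemma len_mull s w : Sgen s -> len (s ** w) = S (len w) \/ S (len (s ** w)) = len w.
Proof.
  intro Ss.
  destruct (len_reduced w) as [a [Sa [La Ea]]].
  destruct (len_reduced (s ** w)) as [b [Sb [Lb Eb]]].
  assert (up : len (s ** w) <= S (len w)).
  { rewrite <- La, <- Ea, <- wprod_cons. apply (len_wprod (s :: a)). auto. }
  assert (down : len w <= S (len (s ** w))).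
  { rewrite <- Lb, <- (gens_mulK s w), <- Eb, <- wprod_cons by assumption.
    apply (len_wprod (s :: b)). auto. }
  destruct (length_parity (s ** w)) as [p Hp].
  assert (P1 : Nat.odd (S (len w)) = p).
  { apply Hp. exists (s :: a). rewrite wprod_cons, Ea. simpl. auto. }
  assert (P2 : Nat.odd (len (s ** w)) = p) by (apply Hp, len_spec).
  assert (len (s ** w) <> len w).
  { intro E. rewrite E, <- P1, Nat.odd_succ, <- Nat.negb_odd in P2.
    destruct (Nat.odd (len w)); discriminate. }
  lia.
Qed.

Lemma len_mulr s w : Sgen s -> len (w ** s) <= S (len w).
Proof.
  intro Ss. destruct (len_reduced w) as [a [Sa [<- <-]]].
  rewrite <- (gmul1r s), <- wprod_nil, <- wprod_cons, <- wprod_app.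
  replace (S (length a)) with (length (a ++ [s])) by (rewrite length_app; simpl; lia).
  apply len_wprod, Forall_app. auto.
Qed.

(* Tits' action: s conjugates the first component and flips the sign exactly when that
   component is s itself.  Any w acts as (r, e) ↦ (w r w⁻¹, e xor N w (w r w⁻¹)). *)
Definition refl_act (s : W) (z : W * bool) : W * bool :=
  (conjg s (fst z), xorb (snd z) (ceqb (fst z) s)).

Definition refl_act_inv (s : W) (z : W * bool) : W * bool :=
  (conjg (ginv s) (fst z), xorb (snd z) (ceqb (conjg (ginv s) (fst z)) s)).

Lemma refl_act_bij s : inverse_pair (W * bool) (refl_act s, refl_act_inv s).
Proof.
  split; intros [r e]; unfold refl_act, refl_act_inv; simpl;
    rewrite ?conjgKV, ?conjgK, xorb_assoc, xorb_nilpotent, xorb_false_r; reflexivity.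
Qed.

Definition refl_perm (s : W) : Perm (W * bool) :=
  exist _ (refl_act s, refl_act_inv s) (refl_act_bij s).

(* With x = s t, the reflections met along (s t)^k are x^i s for i < 2k; each contributes
   a sign flip when it equals rho. *)
Definition refl_parity (x s rho : W) (n : nat) : bool :=
  fold_right xorb false (map (fun i => ceqb rho (gpow x i ** s)) (seq 0 n)).

Lemma conjg_dihedral s t i : Sgen s -> Sgen t ->
  conjg (s ** t) (gpow (s ** t) i ** s) = gpow (s ** t) (S (S i)) ** s.
Proof.
  intros Ss St. unfold conjg. rewrite ginvM, !gens_inv by assumption.
  change (gpow (s ** t) (S (S i))) with (s ** t ** gpow (s ** t) (S i)).
  rewrite gpowSr, !gmulA. reflexivity.
Qed.

Lemma refl_perm_pow s t k r e : Sgen s -> Sgen t ->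
  perm_fun (gpow (refl_perm s ** refl_perm t) k) (r, e) =
  (conjg (gpow (s ** t) k) r,
   xorb e (refl_parity (s ** t) s (conjg (gpow (s ** t) k) r) (k + k))).
Proof.
  intros Ss St. induction k as [|k IH].
  - simpl. rewrite conjg1, xorb_false_r. reflexivity.
  - change (perm_fun (gpow (refl_perm s ** refl_perm t) (S k)) (r, e))
      with (refl_act s (refl_act t (perm_fun (gpow (refl_perm s ** refl_perm t) k) (r, e)))).
    rewrite IH. unfold refl_act; cbn [fst snd].
    set (x := s ** t). set (rho' := conjg (gpow x k) r).
    assert (Erho : conjg s (conjg t rho') = conjg x rho') by (symmetry; apply conjg_mul).
    assert (Erho' : conjg x rho' = conjg (gpow x (S k)) r)
      by (unfold rho'; rewrite <- conjg_mul; reflexivity).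
    rewrite Erho, Erho'. set (rho := conjg (gpow x (S k)) r).
    assert (A1 : ceqb (conjg t rho') s = ceqb rho s).
    { unfold rho. rewrite <- Erho', <- Erho, <- (ceqb_inj (conjg s) _ _ (conjg_inj s)).
      rewrite conjg_self. reflexivity. }
    assert (A2 : ceqb rho' t = ceqb rho (x ** s)).
    { unfold rho. rewrite <- Erho', <- (ceqb_inj (conjg x) _ _ (conjg_inj x)).
      f_equal. unfold x, conjg. rewrite ginvM, !gens_inv, !gmulA by assumption.
      rewrite <- (gmulA (s ** t) t t), gens_invol, gmul1r by assumption. reflexivity. }
    assert (A3 : forall i, ceqb rho' (gpow x i ** s) = ceqb rho (gpow x (S (S i)) ** s)).
    { intro i. unfold rho. rewrite <- Erho', <- (ceqb_inj (conjg x) _ _ (conjg_inj x)).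
      unfold x. rewrite conjg_dihedral by assumption. reflexivity. }
    unfold refl_parity. replace (S k + S k) with (S (S (k + k))) by lia.
    cbn [seq map fold_right gpow]. rewrite <- !seq_shift, !map_map, gmul1, gmul1r.
    rewrite (map_ext _ _ A3), A1, A2.
    destruct e, (ceqb rho s), (ceqb rho (x ** s)), (fold_right xorb false _); reflexivity.
Qed.

Lemma seq_add_shift a n m : seq (a + n) m = map (fun i => i + n) (seq a m).
Proof.
  revert a. induction m as [|m IH]; intro a; simpl; [reflexivity|].
  f_equal. rewrite <- IH. reflexivity.
Qed.

Lemma fold_xorb b l : fold_right xorb b l = xorb (fold_right xorb false l) b.
Proof.
  induction l as [|c l IH]; simpl; [reflexivity|].
  rewrite IH, xorb_assoc. reflexivity.
Qed.

Lemma refl_parity_period x s rho n : gpow x n = gone -> refl_parity x s rho (n + n) = false.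
Proof.
  intro xn. unfold refl_parity. rewrite seq_app, map_app, fold_right_app, seq_add_shift, map_map.
  rewrite (map_ext (fun i => ceqb rho (gpow x (i + n) ** s)) (fun i => ceqb rho (gpow x i ** s))).
  - rewrite fold_xorb. apply xorb_nilpotent.
  - intro i. rewrite gpowD, xn, gmul1r. reflexivity.
Qed.

Lemma refl_perm_relation s t n : Sgen s -> Sgen t -> gpow (s ** t) n = gone ->
  gpow (refl_perm s ** refl_perm t) n = gone.
Proof.
  intros Ss St stn. apply perm_ext. intros [r e].
  rewrite refl_perm_pow, stn, conjg1, refl_parity_period, xorb_false_r by assumption.
  reflexivity.
Qed.

Lemma refl_hom_exists : exists phi : W -> Perm (W * bool),
  (forall x y, phi (x ** y) = phi x ** phi y) /\ forall s, Sgen s -> phi s = refl_perm s.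
Proof. apply coxeter_hom. intros. now apply refl_perm_relation. Qed.

Definition refl_hom : W -> Perm (W * bool) :=
  proj1_sig (constructive_indefinite_description _ refl_hom_exists).

Lemma refl_homM x y : refl_hom (x ** y) = refl_hom x ** refl_hom y.
Proof. apply (proj2_sig (constructive_indefinite_description _ refl_hom_exists)). Qed.

Lemma refl_hom_gen s : Sgen s -> refl_hom s = refl_perm s.
Proof. apply (proj2_sig (constructive_indefinite_description _ refl_hom_exists)). Qed.

Definition act (w : W) : W * bool -> W * bool := perm_fun (refl_hom w).

Lemma act_mul x y z : act (x ** y) z = act x (act y z).
Proof. unfold act. rewrite refl_homM. reflexivity. Qed.

Lemma act1 z : act gone z = z.
Proof.
  unfold act. replace (refl_hom gone) with (@gone (Perm (W * bool))); [reflexivity|].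
  symmetry. apply gidem_eq1. rewrite <- refl_homM, gmul1. reflexivity.
Qed.

Lemma act_gen s z : Sgen s -> act s z = refl_act s z.
Proof. intro Ss. unfold act. rewrite refl_hom_gen by assumption. reflexivity. Qed.

Lemma act_form w : exists c : W -> bool, forall r e, act w (r, e) = (conjg w r, xorb e (c r)).
Proof.
  destruct (gens_word w) as [a [Sa <-]]. induction Sa as [|s a Ss _ [c Hc]].
  - exists (fun _ => false). intros r e. rewrite wprod_nil, act1, conjg1, xorb_false_r.
    reflexivity.
  - exists (fun r => xorb (c r) (ceqb (conjg (wprod a) r) s)). intros r e.
    rewrite wprod_cons, act_mul, Hc, act_gen by assumption. unfold refl_act; simpl.
    rewrite conjg_mul, xorb_assoc. reflexivity.
Qed.

(* Tits' set N(w): the parity of the occurrences of t among the reflections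
   s1, s1 s2 s1, s1 s2 s3 s2 s1, ... read off any word s1 s2 ... of w. *)
Definition N (w t : W) : bool := snd (act w (conjg (ginv w) t, false)).

Lemma act_N w r e : act w (r, e) = (conjg w r, xorb e (N w (conjg w r))).
Proof. destruct (act_form w) as [c Hc]. unfold N. rewrite !Hc, conjgK. reflexivity. Qed.

Lemma N1 t : N gone t = false.
Proof. unfold N. rewrite act1. reflexivity. Qed.

Lemma N_gen s t : Sgen s -> N s t = ceqb t s.
Proof.
  intro Ss. unfold N. rewrite act_gen by assumption. unfold refl_act; simpl.
  rewrite gens_inv, <- (ceqb_inj (conjg s) t s (conjg_inj s)), conjg_self by assumption.
  reflexivity.
Qed.

Lemma N_mul a b t : N (a ** b) t = xorb (N a t) (N b (conjg (ginv a) t)).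
Proof.
  set (r := conjg (ginv (a ** b)) t).
  assert (Ebr : conjg b r = conjg (ginv a) t)
    by (unfold r; rewrite ginvM, conjg_mul, conjgKV; reflexivity).
  pose proof (act_mul a b (r, false)) as E.
  rewrite !act_N, Ebr, conjgKV in E. unfold r in E. rewrite conjgKV in E.
  apply (f_equal snd) in E. simpl in E. rewrite E. apply xorb_comm.
Qed.

Lemma N_left s v t : Sgen s -> N (s ** v) t = xorb (ceqb t s) (N v (conjg s t)).
Proof. intro Ss. rewrite N_mul, N_gen, gens_inv by assumption. reflexivity. Qed.

Lemma deletion a t : Forall Sgen a -> N (wprod a) t = true ->
  exists p x q, a = p ++ x :: q /\ t ** wprod a = wprod (p ++ q).
Proof.
  intro Sa. revert t. induction Sa as [|x a Sx _ IH]; intros t Nt.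
  - rewrite wprod_nil, N1 in Nt. discriminate.
  - rewrite wprod_cons, N_left in Nt by assumption.
    destruct (ceqb t x) eqn:Etx.
    + apply ceqb_true in Etx as ->. exists [], x, a.
      rewrite wprod_cons, gens_mulK by assumption. auto.
    + destruct (IH _ Nt) as [p [y [q [-> E]]]]. exists (x :: p), y, q. split; [reflexivity|].
      change ((x :: p) ++ q) with (x :: (p ++ q)).
      rewrite !wprod_cons, <- E, !gmulA, gens_mul_conjg by assumption.
      reflexivity.
Qed.

Lemma N_descent s w : Sgen s -> len (s ** w) < len w -> N w s = true.
Proof.
  intros Ss Hlt. rewrite <- (gens_mulK s w) at 1 by assumption.
  rewrite N_left, ceqb_refl, conjg_self by assumption.
  destruct (N (s ** w) s) eqn:Nv; [exfalso|reflexivity].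
  destruct (len_reduced (s ** w)) as [b [Sb [Lb Eb]]]. rewrite <- Eb in Nv.
  destruct (deletion b s Sb Nv) as [p [x [q [-> E]]]].
  rewrite Eb, gens_mulK in E by assumption.
  apply Forall_app_cons in Sb as [Spq _].
  pose proof (len_wprod _ Spq) as L. rewrite <- E in L.
  rewrite !length_app in *. simpl in Lb. lia.
Qed.

Lemma exchange s a : Sgen s -> Forall Sgen a -> len (s ** wprod a) < len (wprod a) ->
  exists p x q, a = p ++ x :: q /\ s ** wprod a = wprod (p ++ q).
Proof. intros Ss Sa Hlt. apply deletion, N_descent; assumption. Qed.

Lemma exchange_app s a c : Sgen s -> Forall Sgen a -> Forall Sgen c ->
  len (s ** wprod (a ++ c)) < len (wprod (a ++ c)) ->
  (exists p x q, a = p ++ x :: q /\ s ** wprod a = wprod (p ++ q)) \/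
  (exists l x q, c = l ++ x :: q /\ s ** wprod a ** wprod c = wprod a ** wprod (l ++ q)).
Proof.
  intros Ss Sa Sc Hlt.
  destruct (exchange s (a ++ c) Ss (proj2 (Forall_app _ _ _) (conj Sa Sc)) Hlt)
    as [p [x [q [Eac E]]]].
  rewrite wprod_app, gmulA in E.
  apply app_eq_app in Eac as [l [[Ea Exq] | [-> ->]]].
  - destruct l as [|y l]; simpl in Exq.
    + rewrite app_nil_r in Ea. subst. right. exists [], x, q.
      rewrite E, wprod_app. auto.
    + inversion Exq; subst. left. exists p, y, l. split; [reflexivity|].
      apply (gmul_cancel_r (wprod c)). rewrite E, <- !wprod_app, <- app_assoc.
      reflexivity.
  - right. exists l, x, q. rewrite E, !wprod_app, gmulA. auto.
Qed.

Lemma parabolic_reduced_word K a : (forall k, K k -> Sgen k) -> Forall K a ->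
  exists b, Forall K b /\ wprod b = wprod a /\ length b = len (wprod a).
Proof.
  intros KS Ka. induction Ka as [|x a Kx _ [b [Kb [Eb Lb]]]].
  - exists []. pose proof (len_wprod [] (Forall_nil _)) as L. simpl in *.
    repeat split; auto; lia.
  - rewrite wprod_cons. destruct (len_mull x (wprod a) (KS x Kx)) as [L|L].
    + exists (x :: b). rewrite wprod_cons, Eb. simpl. repeat split; auto; lia.
    + assert (Hlt : len (x ** wprod b) < len (wprod b)) by (rewrite Eb; lia).
      destruct (exchange x b (KS x Kx) (Forall_impl _ KS Kb) Hlt) as [p [y [q [-> E]]]].
      apply Forall_app_cons in Kb as [Kpq _].
      exists (p ++ q). rewrite <- E, Eb. rewrite !length_app in *. simpl in Lb.
      repeat split; auto; lia.
Qed.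

Definition coset_minimal (K : W -> Prop) (d : W) : Prop :=
  forall u, gen K u -> len d <= len (u ** d).

Lemma coset_minimal_len_word K d b : (forall k, K k -> Sgen k) -> coset_minimal K d ->
  Forall K b -> length b = len (wprod b) -> len (wprod b ** d) = length b + len d.
Proof.
  intros KS dmin Kb. induction Kb as [|x b Kx Kb IH]; intro Lb.
  - rewrite wprod_nil, gmul1. reflexivity.
  - assert (Sb : Forall Sgen b) by exact (Forall_impl _ KS Kb).
    assert (Lb' : length b = len (wprod b)).
    { pose proof (len_wprod b Sb).
      destruct (len_mull x (wprod b) (KS x Kx)); rewrite wprod_cons in Lb; simpl in Lb; lia. }
    specialize (IH Lb'). rewrite wprod_cons, <- gmulA.
    destruct (len_mull x (wprod b ** d) (KS x Kx)) as [L|L]; [simpl; lia|exfalso].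
    destruct (len_reduced d) as [c [Sc [Lc Ec]]].
    assert (Hlt : len (x ** wprod (b ++ c)) < len (wprod (b ++ c)))
      by (rewrite wprod_app, Ec; lia).
    destruct (exchange_app x b c (KS x Kx) Sb Sc Hlt)
      as [[p [y [q [-> E]]]] | [l [y [q [-> E]]]]].
    + apply Forall_app_cons in Sb as [Spq _].
      pose proof (len_wprod _ Spq) as L'. rewrite <- E, <- wprod_cons, <- Lb in L'.
      simpl in L'. rewrite !length_app in L'. simpl in L'. lia.
    + set (u := conjg (ginv (wprod b)) x).
      assert (Ku : gen K u).
      { apply gen_conjg; [apply gen_inv, gen_wprod | apply gen_in]; assumption. }
      assert (Eu : u ** d = wprod (l ++ q)).
      { unfold u. rewrite conjgV_mul, <- Ec, E, gmulA, gmulV, gmul1. reflexivity. }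
      apply Forall_app_cons in Sc as [Slq _].
      pose proof (dmin u Ku) as L'. rewrite Eu in L'. pose proof (len_wprod _ Slq).
      rewrite !length_app in *. simpl in *. lia.
Qed.

Lemma coset_minimal_len K d u : (forall k, K k -> Sgen k) -> coset_minimal K d ->
  gen K u -> len (u ** d) = len u + len d.
Proof.
  intros KS dmin Ku.
  destruct (gen_word K u (fun k Kk => gens_invol k (KS k Kk)) Ku) as [a [Ka <-]].
  destruct (parabolic_reduced_word K a KS Ka) as [b [Kb [Eb Lb]]].
  rewrite <- Eb in Lb |- *. rewrite <- Lb. apply (coset_minimal_len_word K); assumption.
Qed.

Lemma gen_len1 K u : (forall k, K k -> Sgen k) -> gen K u -> len u = 1 -> K u.
Proof.
  intros KS Ku L1.
  destruct (gen_word K u (fun k Kk => gens_invol k (KS k Kk)) Ku) as [a [Ka <-]].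
  destruct (parabolic_reduced_word K a KS Ka) as [[|k [|]] [Kb [Eb Lb]]];
    rewrite L1 in Lb; try discriminate.
  rewrite <- Eb, wprod_cons, wprod_nil, gmul1r. now inversion Kb.
Qed.

Lemma coset_minimal_conjg K d r : (forall k, K k -> Sgen k) -> coset_minimal K d ->
  Sgen r -> gen K (conjg d r) -> K (conjg d r).
Proof.
  intros KS dmin Sr Kr. apply gen_len1; [assumption..|].
  pose proof (coset_minimal_len K d _ KS dmin Kr) as L.
  rewrite conjg_mulr in L. pose proof (len_mulr r d Sr) as L'.
  assert (len (conjg d r) <> 0).
  { intro L0. apply (gens_neq1 r Sr), (gmul_cancel_l d).
    rewrite <- conjg_mulr, (len_eq0 _ L0), gmul1, gmul1r. reflexivity. }
  lia.
Qed.

Lemma coset_minimal_exists K x : exists u, gen K u /\ coset_minimal K (u ** x).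
Proof.
  destruct (nat_min_exists (fun n => exists u, gen K u /\ len (u ** x) = n))
    as [n [[u [Ku <-]] umin]].
  { exists (len (gone ** x)), gone. split; [apply gen_one|reflexivity]. }
  exists u. split; [assumption|]. intros v Kv. rewrite gmulA.
  apply umin. exists (v ** u). split; [apply gen_mul|]; auto.
Qed.

Lemma parabolic_common_conjugator K w : (forall k, K k -> Sgen k) ->
  exists u, gen K u /\ forall s, gen K s -> Sgen (conjg w s) -> K (conjg u s).
Proof.
  intro KS. destruct (coset_minimal_exists K (ginv w)) as [u [Ku umin]].
  exists u. split; [assumption|]. intros s Ks Sws.
  assert (E : conjg (u ** ginv w) (conjg w s) = conjg u s)
    by (rewrite conjg_mul, conjgK; reflexivity).
  rewrite <- E. apply coset_minimal_conjg; [assumption..|].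
  rewrite E. apply gen_conjg; assumption.
Qed.

End CoxeterSystem.

Theorem lemma9p1 (W : Grp) (S S' B B' : W -> Prop) :
  coxeter_gens W (fun _ => True) S ->
  finite_set S ->
  coxeter_gens W (fun _ => True) S' ->
  (forall x, S' x -> conj_closure (fun _ => True) S x) ->
  sharp_angled (fun _ => True) S S' ->
  (forall x, B x -> S x) ->
  (forall x, B' x -> S' x) ->
  (forall x, gen B x <-> gen B' x) ->
  (forall x, B' x -> conj_closure (gen B) B x) /\ sharp_angled (gen B) B B'.
Proof.
  intros coxS _ coxS' S'_conj sharpS BS B'S' genBB'. split.
  - intros x B'x. destruct (S'_conj x (B'S' x B'x)) as [h [y [_ [Sy Ex]]]].
    change (x = conjg h y) in Ex.
    destruct (parabolic_common_conjugator W S coxS B (ginv h) BS) as [u [Bu Hu]].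
    exists (ginv u), (conjg u x). split; [now apply gen_inv|]. split.
    + apply Hu; [now apply genBB', gen_in|]. rewrite Ex, conjgK. exact Sy.
    + symmetry. apply conjgK.
  - intros s t m Bs Bt st_m m_gt2.
    destruct (sharpS s t m (BS s Bs) (BS t Bt) st_m m_gt2) as [w [_ [S'ws S'wt]]].
    destruct (parabolic_common_conjugator W S' coxS' B' w B'S') as [u [B'u Hu]].
    exists u. split; [now apply genBB'|].
    split; apply Hu; auto; apply genBB', gen_in; assumption.
Qed.
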